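(* For every integer $m\ge2$ and every $\boldsymbol{a}\in U_{\mathbb{Z}_m}$, the $m$-fold Hurwitz power satisfies $\boldsymbol{a}\star\cdots\star\boldsymbol{a}=\bar{\boldsymbol{1}}=(1,0,0,\dots)$. Consequently, for every prime $p$ and every $n\ge2$, $(U^{(n)}_{\mathbb{Z}_p},\star)$ is an abelian group of order $p^{n-1}$ in which every non-identity element has order $p$, and hence $(U^{(n)}_{\mathbb{Z}_p},\star)\cong(H^{(n-1)}_{\mathbb{Z}_p},+)$.
   Context: For a commutative ring $R$, $H_R$ is the set of sequences in $R$, $H_R^{(n)}$ the set of finite sequences $(a_0,\dots,a_{n-1})$ of length $n$ with componentwise addition, $U_R=\{\boldsymbol a\in H_R:a_0=1\}$ and $U_R^{(n)}$ the length-$n$ sequences with first term $1$. The Hurwitz product is $(\boldsymbol{a}\star\boldsymbol{b})_k=\sum_{h=0}^k\binom{k}{h}a_hb_{k-h}$ (on length-$n$ sequences, computed for $k=0,\dots,n-1$). $\mathbb{Z}_m=\mathbb{Z}/m\mathbb{Z}$. *)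

From HB Require Import structures.
From mathcomp Require Import all_boot all_order all_algebra.
Set Implicit Arguments. Unset Strict Implicit. Unset Printing Implicit Defensive.
Import GRing.Theory.
Local Open Scope ring_scope.


Definition hseq (R : comNzRingType) := nat -> R.

Definition hstar (R : comNzRingType) (a b : nat -> R) : nat -> R :=
  fun k => \sum_(h < k.+1) ('C(k, h))%:R * a h * b (k - h)%N.

Definition inU (R : comNzRingType) (a : nat -> R) : Prop := a 0%N = 1.

Definition hone (R : comNzRingType) : nat -> R := fun k => (k == 0%N)%:R.

Definition hpow (R : comNzRingType) (a : nat -> R) (k : nat) : nat -> R :=
  iter k (hstar a) (@hone R).

Definition hstarn (R : comNzRingType) (n : nat) (a b : n.-tuple R) : n.-tuple R :=
  [tuple \sum_(h < i.+1) ('C(i, h))%:R * a`_h * b`_(i - h) | i < n].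

Definition honen (R : comNzRingType) (n : nat) : n.-tuple R :=
  [tuple (i == 0 :> nat)%:R | i < n].

Definition hpown (R : comNzRingType) (n : nat) (a : n.-tuple R) (k : nat) : n.-tuple R :=
  iter k (hstarn a) (honen R n).

Definition Un (R : comNzRingType) (n : nat) : pred (n.-tuple R) :=
  fun a => a`_0 == 1.

Definition abelian_group_on (T : Type) (S : T -> Prop) (op : T -> T -> T) (e : T) : Prop :=
  S e /\ [/\
      (forall a b, S a -> S b -> S (op a b)),
      (forall a b c, S a -> S b -> S c -> op a (op b c) = op (op a b) c),
      (forall a b, S a -> S b -> op a b = op b a),
      (forall a, S a -> op e a = a) &
      (forall a, S a -> exists b, S b /\ op a b = e)].

Definition has_order (T : Type) (op : T -> T -> T) (e a : T) (k : nat) : Prop :=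
  (0 < k)%N /\ iter k (op a) e = e /\
  (forall j, (0 < j)%N -> (j < k)%N -> iter j (op a) e <> e).

(** The shift [D a = (a 1, a 2, ...)] is a derivation for the Hurwitz product,
    so [D (a^m) = m * a^(m-1) * D a]; over [Z_m] the factor [m] vanishes, and
    since [a 0 = 1] forces [a^m 0 = 1], we get [a^m = 1bar].  Truncating to
    length [n] is compatible with the product, so [U^(n)] over [Z_p] is a finite
    abelian group of exponent [p] with [p^(n-1)] elements: its nontrivial
    elements have order [p], and, being elementary abelian, it is isomorphic to
    any other elementary abelian [p]-group of the same order, such as
    [(Z_p)^(n-1)]. *)

From HB Require Import structures.
From mathcomp Require Import all_boot all_order all_algebra all_fingroup all_solvable.
From Stdlib Require Import FunctionalExtensionality.
Set Implicit Arguments. Unset Strict Implicit. Unset Printing Implicit Defensive.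
Import GRing.Theory FinRing.Theory.
Local Open Scope ring_scope.

Section HurwitzProduct.
Variable R : comNzRingType.
Implicit Types a b c : nat -> R.

Definition hderiv a : nat -> R := fun k => a k.+1.

Lemma hstar0 a b : hstar a b 0 = a 0%N * b 0%N.
Proof. by rewrite /hstar big_ord_recl big_ord0 addr0 bin0 mul1r. Qed.

Lemma hstarS a b k :
  hstar a b k.+1 = hstar (hderiv a) b k + hstar a (hderiv b) k.
Proof.
rewrite /hstar /hderiv big_ord_recl bin0 subn0.
under eq_bigr => i _ do rewrite /bump /= binS natrD !mulrDl subSS.
rewrite big_split /= addrA [RHS]addrC; congr (_ + _).
rewrite [RHS]big_ord_recl bin0 subn0 big_ord_recr /= bin_small // !mul0r addr0.
by rewrite mul1r; congr (_ + _); apply: eq_bigr => i _; rewrite /bump /= subnSK.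
Qed.

Lemma hderiv_hstar a b :
  hderiv (hstar a b) = (fun k => hstar (hderiv a) b k + hstar a (hderiv b) k).
Proof. by apply: functional_extensionality => k; rewrite /hderiv hstarS. Qed.

Lemma hstarC a b k : hstar a b k = hstar b a k.
Proof.
elim: k a b => [|k IH] a b; first by rewrite !hstar0 mulrC.
by rewrite !hstarS IH addrC IH.
Qed.

Lemma hstarDl a b c k : hstar (fun i => a i + b i) c k = hstar a c k + hstar b c k.
Proof. by rewrite /hstar -big_split; apply: eq_bigr => i _; rewrite mulrDr mulrDl. Qed.

Lemma hstarDr a b c k : hstar c (fun i => a i + b i) k = hstar c a k + hstar c b k.
Proof. by rewrite hstarC hstarDl !(hstarC c). Qed.

Lemma hstarZr (r : R) a c k : hstar a (fun i => r * c i) k = r * hstar a c k.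
Proof.
rewrite /hstar mulr_sumr; apply: eq_bigr => i _.
by rewrite mulrCA; congr (_ * _); apply: mulrCA.
Qed.

Lemma hstarA a b c k : hstar a (hstar b c) k = hstar (hstar a b) c k.
Proof.
elim: k a b c => [|k IH] a b c; first by rewrite !hstar0 mulrA.
rewrite !hstarS !hderiv_hstar hstarDl hstarDr !IH -!addrA.
by congr (_ + _); apply: addrC.
Qed.

Lemma hstar1l a k : hstar (@hone R) a k = a k.
Proof.
rewrite /hstar big_ord_recl /hone /= bin0 mulr1 mul1r subn0 big1 ?addr0 //.
by move=> i _; rewrite /bump /= mulr0 mul0r.
Qed.

Lemma hstar1r a k : hstar a (@hone R) k = a k.
Proof. by rewrite hstarC hstar1l. Qed.

Lemma hpow_at0 a j : a 0%N = 1 -> hpow a j 0%N = 1.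
Proof. by move=> a0; elim: j => [|j IH] //=; rewrite hstar0 IH a0 mulr1. Qed.

Lemma hderiv_hpow a j k :
  hderiv (hpow a j.+1) k = j.+1%:R * hstar (hpow a j) (hderiv a) k.
Proof.
elim: j k => [|j IH] k.
  rewrite /hderiv /= hstarS /= mul1r hstar1l.
  have -> : hderiv (@hone R) = (fun i => 0 * hone R i).
    by apply: functional_extensionality => i; rewrite mul0r.
  by rewrite hstarZr mul0r addr0 hstar1r.
rewrite -[LHS]/(hstar a (hpow a j.+1) k.+1) hstarS.
have -> : hderiv (hpow a j.+1) = (fun i => j.+1%:R * hstar (hpow a j) (hderiv a) i).
  by apply: functional_extensionality => i; rewrite IH.
rewrite hstarZr hstarA (hstarC (hderiv a)).
by rewrite -{1}(mul1r (hstar _ _ k)) -mulrDl addrC natr1.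
Qed.

Lemma hpow_pchar m a : m%:R = 0 :> R -> a 0%N = 1 -> hpow a m = @hone R.
Proof.
move=> m0 a0; apply: functional_extensionality => -[|k]; first exact: hpow_at0.
case: m m0 => [//|m] m0.
by rewrite -[hpow _ _ _]/(hderiv _ k) hderiv_hpow m0 mul0r.
Qed.

End HurwitzProduct.

Section Truncation.
Variables (R : comNzRingType) (n : nat).
Implicit Types (a b c : n.-tuple R) (f g : nat -> R).

(* A length-[n] sequence is read as an infinite one padded with zeros. *)
Definition tseq a : nat -> R := fun k => a`_k.

Definition htrunc f : nat -> R := fun k => if (k < n)%N then f k else 0.

Lemma htrunc_tseq a : htrunc (tseq a) = tseq a.
Proof.
apply: functional_extensionality => k; rewrite /htrunc /tseq.
by case: ltnP => // kn; rewrite nth_default ?size_tuple.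
Qed.

Lemma tseq_inj : injective tseq.
Proof.
move=> a b e; apply: val_inj; apply: (@eq_from_nth _ 0); first by rewrite !size_tuple.
by move=> i _; have := congr1 (fun f => f i) e.
Qed.

Lemma tseq_hstarn a b : tseq (hstarn a b) = htrunc (hstar (tseq a) (tseq b)).
Proof.
apply: functional_extensionality => k; rewrite /htrunc /tseq.
case: ltnP => kn; last by rewrite nth_default ?size_tuple.
by rewrite /hstarn (nth_map (Ordinal kn)) ?size_enum_ord // nth_enum_ord.
Qed.

Lemma tseq_honen : tseq (honen R n) = htrunc (@hone R).
Proof.
apply: functional_extensionality => k; rewrite /htrunc /tseq.
case: ltnP => kn; last by rewrite nth_default ?size_tuple.
by rewrite /honen (nth_map (Ordinal kn)) ?size_enum_ord // nth_enum_ord.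
Qed.

(* Coefficient [k] of a Hurwitz product only involves coefficients [<= k]. *)
Lemma htrunc_hstarl f g : htrunc (hstar (htrunc f) g) = htrunc (hstar f g).
Proof.
apply: functional_extensionality => k; rewrite /htrunc.
case: ltnP => // kn; apply: eq_bigr => i _.
by rewrite (leq_ltn_trans _ kn) // -ltnS.
Qed.

Lemma htrunc_hstarr f g : htrunc (hstar f (htrunc g)) = htrunc (hstar f g).
Proof.
apply: functional_extensionality => k; rewrite /htrunc.
case: ltnP => // kn; apply: eq_bigr => i _.
by rewrite (leq_ltn_trans _ kn) // leq_subr.
Qed.

Lemma tseq_hpown a k : tseq (hpown a k) = htrunc (hpow (tseq a) k).
Proof.
elim: k => [|k IH]; first exact: tseq_honen.
rewrite /hpown iterS -/(hpown a k) tseq_hstarn IH htrunc_hstarr.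
by rewrite -{1}htrunc_tseq htrunc_hstarl.
Qed.

Lemma hstarnA a b c : hstarn a (hstarn b c) = hstarn (hstarn a b) c.
Proof.
apply: tseq_inj; rewrite !tseq_hstarn htrunc_hstarr htrunc_hstarl.
by congr htrunc; apply: functional_extensionality => k; rewrite hstarA.
Qed.

Lemma hstarnC a b : hstarn a b = hstarn b a.
Proof.
apply: tseq_inj; rewrite !tseq_hstarn.
by congr htrunc; apply: functional_extensionality => k; rewrite hstarC.
Qed.

Lemma hstar1n a : hstarn (honen R n) a = a.
Proof.
apply: tseq_inj; rewrite tseq_hstarn tseq_honen htrunc_hstarl -[RHS]htrunc_tseq.
by congr htrunc; apply: functional_extensionality => k; rewrite hstar1l.
Qed.

Lemma hpown_pchar m a : m%:R = 0 :> R -> a \in @Un R n -> hpown a m = honen R n.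
Proof. by move=> m0 Ua; apply: tseq_inj; rewrite tseq_hpown tseq_honen hpow_pchar //; apply/eqP. Qed.

Hypothesis n_gt0 : (0 < n)%N.

Lemma honen_Un : honen R n \in @Un R n.
Proof. by rewrite unfold_in -/(tseq _ 0) tseq_honen /htrunc n_gt0. Qed.

Lemma hstarn_Un a b : a \in @Un R n -> b \in @Un R n -> hstarn a b \in @Un R n.
Proof.
rewrite !unfold_in -!/(tseq _ 0) tseq_hstarn /htrunc n_gt0 hstar0.
by move=> /eqP -> /eqP ->; rewrite mulr1.
Qed.

Lemma hpown_Un a k : a \in @Un R n -> hpown a k \in @Un R n.
Proof.
by rewrite !unfold_in -!/(tseq _ 0) tseq_hpown /htrunc n_gt0 => /eqP /hpow_at0 ->.
Qed.

Lemma Un_abelian_group m : (0 < m)%N -> m%:R = 0 :> R ->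
  abelian_group_on (fun a => a \in @Un R n) (@hstarn R n) (honen R n).
Proof.
move=> m_gt0 m0; split; first exact: honen_Un.
split=> [a b|a b c _ _ _|a b _ _|a _|a Ua]; first exact: hstarn_Un.
- exact: hstarnA.
- exact: hstarnC.
- exact: hstar1n.
exists (hpown a m.-1); split; first exact: hpown_Un.
by rewrite -[hstarn a _]/(hpown a m.-1.+1) prednK // hpown_pchar.
Qed.

End Truncation.

Lemma card_Un (R : finComNzRingType) n : #|@Un R n.+1| = (#|R| ^ n)%N.
Proof.
have -> : #|@Un R n.+1| = #|[set [tuple of 1 :: t] | t : n.-tuple R]|.
  apply: eq_card => t; rewrite unfold_in; apply/eqP/imsetP => [t0|[u _ ->]] //.
  exists (behead_tuple t) => //.
  by apply: val_inj; rewrite /= -t0; case: t {t0} => -[|x s].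
rewrite card_imset; last by move=> u v /(congr1 val) [] /val_inj.
by rewrite card_tuple.
Qed.

Lemma mulrn_coprime_eq0 (V : zmodType) (x : V) i j :
  (0 < i)%N -> coprime i j -> x *+ i = 0 -> x *+ j = 0 -> x = 0.
Proof.
move=> i_gt0 /eqP coij xi0 xj0; case: (egcdnP j i_gt0) => ki kj Bezout _.
have : x *+ (ki * i) = x *+ (kj * j + 1).
  by rewrite Bezout coij.
by rewrite mulrnDr !(mulnC _ i) (mulnC _ j) !mulrnA xi0 xj0 !mul0rn add0r.
Qed.

Lemma abelem_zmod (V : finZmodType) p :
  prime p -> (forall x : V, x *+ p = 0) -> (p.-abelem [set: V])%g.
Proof.
move=> p_pr Vp; apply/abelemP => //; split; first exact: zmod_abelian.
by move=> x _; rewrite zmodXgE Vp.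
Qed.

(* [U^(n+1)] over [Z_m], written additively.  The inverse is the [(m-1)]-th
   power, expressed through [(Zp_trunc m).+2] (which is [m] when [1 < m]) so
   that no hypothesis on [m] is needed. *)
Definition Uz (m n : nat) := {a : n.+1.-tuple 'Z_m | a \in @Un 'Z_m n.+1}.
HB.instance Definition _ m n := Finite.on (Uz m n).

Section UzGroup.
Variables m n : nat.
Implicit Types x y z : Uz m n.

Let Zm_pchar : (Zp_trunc m).+2%:R = 0 :> 'Z_m := @pchar_Zp (Zp_trunc m).+2 isT.

Definition Uz_one : Uz m n := exist _ (honen 'Z_m n.+1) (honen_Un _ (ltn0Sn n)).
Definition Uz_mul x y : Uz m n :=
  exist _ (hstarn (val x) (val y)) (hstarn_Un (ltn0Sn n) (valP x) (valP y)).
Definition Uz_inv x : Uz m n :=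
  exist _ (hpown (val x) (Zp_trunc m).+1) (hpown_Un (ltn0Sn n) _ (valP x)).

Lemma Uz_mulA : associative Uz_mul.
Proof. by move=> x y z; apply: val_inj; rewrite /= hstarnA. Qed.

Lemma Uz_mulC : commutative Uz_mul.
Proof. by move=> x y; apply: val_inj; rewrite /= hstarnC. Qed.

Lemma Uz_mul1 : left_id Uz_one Uz_mul.
Proof. by move=> x; apply: val_inj; rewrite /= hstar1n. Qed.

Lemma Uz_mulV : left_inverse Uz_one Uz_inv Uz_mul.
Proof.
move=> x; apply: val_inj; rewrite /= hstarnC.
exact: (hpown_pchar Zm_pchar (valP x)).
Qed.

End UzGroup.

HB.instance Definition _ m n :=
  GRing.isZmodule.Build (Uz m n) (@Uz_mulA m n) (@Uz_mulC m n) (@Uz_mul1 m n) (@Uz_mulV m n).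

Lemma val_Uz_mulrn m n (x : Uz m n) k : val (x *+ k) = hpown (val x) k.
Proof. by elim: k => [|k IH] //; rewrite mulrS /= IH. Qed.

Lemma Uz_pchar m n (x : Uz m n) : (1 < m)%N -> x *+ m = 0.
Proof.
move=> m_gt1; apply: val_inj.
by rewrite val_Uz_mulrn (hpown_pchar (pchar_Zp m_gt1)) ?(valP x).
Qed.

Lemma hpown_order p n (a : n.+1.-tuple 'Z_p) : prime p ->
  a \in @Un 'Z_p n.+1 -> a <> honen 'Z_p n.+1 ->
  has_order (@hstarn 'Z_p n.+1) (honen 'Z_p n.+1) a p.
Proof.
move=> p_pr Ua a_neq1; pose x : Uz p n := exist _ a Ua.
have xk k : iter k (hstarn a) (honen 'Z_p n.+1) = val (x *+ k).
  by rewrite val_Uz_mulrn.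
split; first exact: prime_gt0.
split=> [|j j_gt0 j_lt_p]; first by rewrite xk Uz_pchar ?prime_gt1.
rewrite xk => xj1; apply: a_neq1.
have coprime_pj : coprime p j.
  by rewrite prime_coprime //; apply/negP => /(dvdn_leq j_gt0); rewrite leqNgt j_lt_p.
have xp0 : x *+ p = 0 by rewrite Uz_pchar ?prime_gt1.
have xj0 : x *+ j = 0 by apply: val_inj.
by rewrite -[a]/(val x) (mulrn_coprime_eq0 (prime_gt0 p_pr) coprime_pj xp0 xj0).
Qed.

Lemma Un_isog_row p n : prime p ->
  exists f : n.+1.-tuple 'Z_p -> 'rV['Z_p]_n,
    (forall a b, a \in @Un 'Z_p n.+1 -> b \in @Un 'Z_p n.+1 -> f a = f b -> a = b)
    /\ (forall v, exists2 a, a \in @Un 'Z_p n.+1 & f a = v)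
    /\ (forall a b, a \in @Un 'Z_p n.+1 -> b \in @Un 'Z_p n.+1 ->
          f (hstarn a b) = f a + f b).
Proof.
move=> p_pr; have p_gt1 := prime_gt1 p_pr.
pose G := [set: (Uz p n : finZmodType)]%G; pose H := [set: 'rV['Z_p]_n]%G.
have abG : (p.-abelem G)%g by apply: abelem_zmod => // x; apply: Uz_pchar.
have abH : (p.-abelem H)%g.
  by apply: abelem_zmod => // v; rewrite -scaler_nat pchar_Zp // scale0r.
have cardHG : #|H| = #|G|.
  rewrite !cardsT card_mx card_ord mul1n card_sig.
  by rewrite (eq_card (B := @Un 'Z_p n.+1)) // card_Un card_ord Zp_cast.
have : (G \isog H)%g by rewrite (isog_abelem_card _ abG) abH cardHG eqxx.
case/isogP => f /injmP f_inj f_onto.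
pose F a := f (insubd (Uz_one p n) a).
exists F; split; [|split].
- move=> a b Ua Ub /f_inj eqab.
  by rewrite -(insubdK (Uz_one p n) Ua) -(insubdK (Uz_one p n) Ub) eqab // inE.
- move=> v; have : v \in (f @* G)%g by rewrite f_onto inE.
  case/morphimP => x _ _ ->; exists (val x); first exact: valP.
  by rewrite /F valKd.
- move=> a b Ua Ub; rewrite /F -zmodMgE -morphM ?inE //.
  by congr (f _); apply: val_inj; rewrite /= !insubdK // hstarn_Un.
Qed.

Theorem mainTheorem7 :
  (forall (m : nat), (1 < m)%N ->
     forall a : nat -> 'Z_m, inU a -> hpow a m = @hone 'Z_m)
  /\
  (forall (p n : nat), prime p -> (1 < n)%N ->
     abelian_group_on (fun a => a \in @Un 'Z_p n) (@hstarn 'Z_p n) (@honen 'Z_p n)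
     /\ #|@Un 'Z_p n| = (p ^ n.-1)%N
     /\ (forall a : n.-tuple 'Z_p, a \in @Un 'Z_p n -> a <> @honen 'Z_p n ->
           has_order (@hstarn 'Z_p n) (@honen 'Z_p n) a p)
     /\ (exists f : n.-tuple 'Z_p -> 'rV['Z_p]_(n.-1),
           (forall a b, a \in @Un 'Z_p n -> b \in @Un 'Z_p n -> f a = f b -> a = b)
           /\ (forall v, exists2 a, a \in @Un 'Z_p n & f a = v)
           /\ (forall a b, a \in @Un 'Z_p n -> b \in @Un 'Z_p n ->
                 f (@hstarn 'Z_p n a b) = f a + f b))).
Proof.
split=> [m m_gt1 a Ua|p [//|n] p_pr _]; first exact: hpow_pchar (pchar_Zp m_gt1) Ua.
have p_gt1 := prime_gt1 p_pr.
split; first exact: Un_abelian_group (prime_gt0 p_pr) (pchar_Zp p_gt1).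
split; first by rewrite card_Un card_ord Zp_cast.
split; first by move=> a; apply: hpown_order.
exact: Un_isog_row.
Qed.
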